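(* For every integer $k\geq 2$ and every bipartite graph $G$ containing at most one cycle, $\nu_{k}(G) \geq \frac{\nu_{k-1}(G) + \nu_{k+1}(G)}{2}$.
   Context: Graphs are finite, without loops, possibly with multiple edges. For $k\geq 1$, $\nu_k(G)$ is the maximum number of edges of a $k$-edge-colorable subgraph of $G$. *)

(* A finite loopless multigraph is given by a finite vertex
   type V, a finite edge type E and endpoint maps src tgt : E -> V with
   src e != tgt e for every edge (parallel edges allowed). *)
From mathcomp Require Import all_boot.
Set Implicit Arguments. Unset Strict Implicit. Unset Printing Implicit Defensive.

Section Multigraph.
Variables (V E : finType) (src tgt : E -> V).

Definition loopless := forall e : E, src e != tgt e.

Definition incident (v : V) (e : E) : bool := (src e == v) || (tgt e == v).

Definition share (e f : E) : bool :=
  [|| src e == src f, src e == tgt f, tgt e == src f | tgt e == tgt f].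

Definition bipartite := exists side : V -> bool, forall e, side (src e) != side (tgt e).

Definition deg_in (C : {set E}) (v : V) : nat := #|[set e in C | incident v e]|.

Definition eadj_in (C : {set E}) : rel E :=
  fun e f => [&& e \in C, f \in C & share e f].

(* C is (the edge set of) a cycle: nonempty, connected, every vertex of
   degree 0 or 2 in C.  (Two parallel edges form a cycle of length 2.) *)
Definition is_cycle (C : {set E}) : bool :=
  [&& C != set0,
      [forall v, (deg_in C v == 0) || (deg_in C v == 2)] &
      [forall e in C, forall f in C, connect (eadj_in C) e f]].

Definition at_most_one_cycle :=
  forall C D : {set E}, is_cycle C -> is_cycle D -> C = D.

Definition k_colorable (k : nat) (F : {set E}) : bool :=
  [exists col : {ffun E -> 'I_k},
     [forall e in F, forall f in F, ((e != f) && share e f) ==> (col e != col f)]].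

Definition nu (k : nat) : nat := \max_(F : {set E} | k_colorable k F) #|F|.

End Multigraph.

(* By König's edge-colouring theorem, a subgraph of a bipartite multigraph is
   k-edge-colourable iff its maximum degree is at most k.  Let F1 and F2 be
   optimal subgraphs for k-1 and k+1 colours, I their intersection and J their
   symmetric difference; then deg_J(v) + 2 deg_I(v) <= 2k at every vertex.
   Splitting J into two halves J1, J2 with deg_Ji(v) <= ceil(deg_J(v)/2) makes
   I + J1 and I + J2 of maximum degree at most k, and their sizes add up to
   |F1| + |F2|. *)

From mathcomp Require Import all_boot perm zify.
Set Implicit Arguments. Unset Strict Implicit. Unset Printing Implicit Defensive.

Lemma connect_preserved (T : finType) (r : rel T) (P : pred T) x y :
  (forall a b, r a b -> P a -> P b) -> connect r x y -> P x -> P y.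
Proof.
move=> rP /connectP[p]; elim: p x => [|z p IHp] x /=; first by move=> _ ->.
by case/andP=> rxz pz ly Px; apply: (IHp z pz ly); exact: rP rxz Px.
Qed.

Lemma connect_last_step (T : finType) (r : rel T) x y :
  connect r x y -> y != x -> exists2 z, connect r x z & r z y.
Proof.
case/connectP=> p; elim/last_ind: p => [|p z _] /=; first by move=> _ ->; rewrite eqxx.
rewrite rcons_path last_rcons => /andP[xp rz] -> _.
by exists (last x p) => //; apply/connectP; exists p.
Qed.

Lemma card_leq_inj_lt (T : finType) (A : {set T}) (g : T -> nat) m :
  {in A &, injective g} -> {in A, forall x, g x < m} -> #|A| <= m.
Proof.
move=> g_inj g_lt; rewrite cardE -(size_map g) -[m](size_iota 0).
apply: uniq_leq_size => [|_ /mapP[x xA ->]].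
  by rewrite map_inj_in_uniq ?enum_uniq // => x y; rewrite !mem_enum; exact: g_inj.
by rewrite mem_iota g_lt // -mem_enum.
Qed.

Lemma cards_symdiff (T : finType) (A B : {set T}) :
  #|(A :|: B) :\: (A :&: B)| + 2 * #|A :&: B| = #|A| + #|B|.
Proof.
have IU : A :&: B \subset A :|: B by apply/subsetP=> x; rewrite !inE => /andP[->].
by rewrite cardsDS // -cardsUI; have := subset_leq_card IU; lia.
Qed.

Lemma cards_symdiff_split (T : finType) (A B H : {set T}) :
    H \subset (A :|: B) :\: (A :&: B) ->
  #|A :&: B :|: H| + #|A :&: B :|: ((A :|: B) :\: (A :&: B) :\: H)| = #|A| + #|B|.
Proof.
set I := A :&: B; set J := _ :\: I => HJ.
have cardIU (X : {set T}) : X \subset J -> #|I :|: X| = #|I| + #|X|.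
  move=> XJ; rewrite cardsU; suff -> : I :&: X = set0 by rewrite cards0 subn0.
  apply/setP=> x; rewrite !inE; apply/negbTE/andP=> -[xI xX].
  by move: (subsetP XJ x xX); rewrite !inE xI.
rewrite !cardIU ?subsetDl // cardsDS // -(cards_symdiff A B) -/I -/J.
by have := subset_leq_card HJ; lia.
Qed.

Section Multigraph.
Variables (V E : finType) (src tgt : E -> V).
Local Notation inc := (incident src tgt).
Local Notation deg := (deg_in src tgt).
Local Notation share := (share src tgt).
Local Notation k_colorable := (k_colorable src tgt).

Lemma incident_src e : inc (src e) e.
Proof. by rewrite /incident eqxx. Qed.

Lemma incident_tgt e : inc (tgt e) e.
Proof. by rewrite /incident eqxx orbT. Qed.

Lemma shareP e f : reflect (exists w, inc w e && inc w f) (share e f).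
Proof.
apply: (iffP idP) => [|[w /andP[]]]; last first.
  by rewrite /incident /share => /orP[]/eqP<- /orP[]/eqP->; rewrite eqxx ?orbT.
by case/or4P=> /eqP ef; [exists (src e) | exists (src e) | exists (tgt e) | exists (tgt e)];
  rewrite /incident eqxx ef eqxx ?orbT.
Qed.

Lemma share_incident w e f : inc w e -> inc w f -> share e f.
Proof. by move=> we wf; apply/shareP; exists w; rewrite we. Qed.

Lemma share_sym e f : share e f = share f e.
Proof. by apply/shareP/shareP=> -[w]; rewrite andbC; exists w. Qed.

Definition proper_coloring k (F : {set E}) (col : E -> 'I_k) :=
  forall e f, e \in F -> f \in F -> e != f -> share e f -> col e != col f.

Lemma k_colorableP k (F : {set E}) :
  reflect (exists col : E -> 'I_k, proper_coloring F col) (k_colorable k F).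
Proof.
apply: (iffP existsP) => [[col /forallP colP] | [col colP]].
  exists col => e f eF fF ef ref.
  by move: (colP e); rewrite eF => /forallP/(_ f); rewrite fF ef ref.
exists (finfun col); apply/forallP=> e; apply/implyP=> eF.
apply/forallP=> f; apply/implyP=> fF; apply/implyP=> /andP[ef ref].
by rewrite !ffunE colP.
Qed.

Lemma k_colorable_deg k (F : {set E}) v : k_colorable k F -> deg F v <= k.
Proof.
case/k_colorableP=> col colP; apply: (@card_leq_inj_lt _ _ (fun e => val (col e))).
  move=> e f; rewrite !inE => /andP[eF ve] /andP[fF vf] /val_inj cef.
  by apply: contra_eq cef => ef; apply: colP (share_incident ve vf).
by move=> e _; exact: ltn_ord.
Qed.

Lemma subset_deg (A B : {set E}) w : A \subset B -> deg A w <= deg B w.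
Proof.
move=> AB; apply: subset_leq_card; apply/subsetP=> f; rewrite !inE => /andP[fA ->].
by rewrite (subsetP AB).
Qed.

Lemma deg_setD1 (F : {set E}) e w : e \in F -> inc w e -> deg (F :\ e) w < deg F w.
Proof.
move=> eF we; rewrite /deg_in (cardsD1 e [set f in F | inc w f]) inE eF we.
by apply: subset_leq_card; apply/subsetP=> f; rewrite !inE => /andP[/andP[-> ->] ->].
Qed.

Lemma missing_color k (F : {set E}) (col : E -> 'I_k) w : deg F w < k ->
  exists c : 'I_k, forall f, f \in F -> inc w f -> col f != c.
Proof.
move=> degw; set S := [set f in F | inc w f].
have [c cS | full] := pickP [pred c | c \notin col @: S].
  by exists c => f fF wf; apply: contraNneq cS => <-; apply: imset_f; rewrite inE fF.
suff : k <= deg F w by rewrite leqNgt degw.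
rewrite -[k]card_ord -cardsT; apply: leq_trans (leq_imset_card col S).
by apply/subset_leq_card/subsetP=> c _; move/negbFE: (full c).
Qed.

Lemma deg_setU (A B : {set E}) w : deg (A :|: B) w <= deg A w + deg B w.
Proof.
rewrite /deg_in -cardsUI; apply: leq_trans (leq_addr _ _); apply: subset_leq_card.
by apply/subsetP=> f; rewrite !inE => /andP[/orP[]-> ->]; rewrite ?orbT.
Qed.

Lemma deg_symdiff (A B : {set E}) w :
  deg ((A :|: B) :\: (A :&: B)) w + 2 * deg (A :&: B) w = deg A w + deg B w.
Proof.
pose at_w (X : {set E}) := [set f in X | inc w f].
have setI_w : at_w (A :&: B) = at_w A :&: at_w B.
  by apply/setP=> f; rewrite !inE; case: (inc w f); rewrite ?andbF ?andbT.
have symdiff_w : at_w ((A :|: B) :\: (A :&: B)) = (at_w A :|: at_w B) :\: (at_w A :&: at_w B).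
  by apply/setP=> f; rewrite !inE; case: (f \in A); case: (f \in B); case: (inc w f).
by rewrite /deg_in -!/(at_w _) setI_w symdiff_w cards_symdiff.
Qed.

Lemma deg_setIU_le (F1 F2 H : {set E}) k w :
    deg F1 w + deg F2 w <= 2 * k ->
    deg H w <= uphalf (deg ((F1 :|: F2) :\: (F1 :&: F2)) w) ->
  deg (F1 :&: F2 :|: H) w <= k.
Proof.
by move=> deg_F12 deg_H; have := deg_setU (F1 :&: F2) H w; have := deg_symdiff F1 F2 w; lia.
Qed.

Lemma leq_nu k (F : {set E}) : k_colorable k F -> #|F| <= nu src tgt k.
Proof. exact: (@leq_bigmax_cond _ (k_colorable k) (fun F : {set E} => #|F|)). Qed.

Lemma nu_witness k : 0 < k -> exists2 F : {set E}, k_colorable k F & nu src tgt k = #|F|.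
Proof.
move=> k_gt0; have col0 : k_colorable k set0.
  by apply/k_colorableP; exists (fun=> Ordinal k_gt0) => e f; rewrite inE.
exists [arg max_(F > set0 | k_colorable k F) #|F|]; first by case: arg_maxnP.
exact: bigmax_eq_arg.
Qed.

End Multigraph.

Section Darts.
Variables (V E : finType) (src tgt : E -> V).
Local Notation inc := (incident src tgt).

(* A dart [(e, true)] runs from [src e] to [tgt e], a dart [(e, false)] the other way. *)
Definition dhead (x : E * bool) := if x.2 then tgt x.1 else src x.1.
Definition dtail (x : E * bool) := if x.2 then src x.1 else tgt x.1.

Lemma incident_dhead x : inc (dhead x) x.1.
Proof. by rewrite /incident /dhead; case: x.2; rewrite eqxx ?orbT. Qed.

Lemma incident_dart w x : inc w x.1 -> w = dhead x \/ w = dtail x.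
Proof. by rewrite /incident /dhead /dtail; case: x.2 => /orP[]/eqP->; auto. Qed.

Lemma dtail_from w f : inc w f -> dtail (f, src f == w) = w.
Proof. by rewrite /dtail /incident /=; case: eqP => //= _ /eqP. Qed.

End Darts.

Section KempeChain.
Variables (V E : finType) (src tgt : E -> V) (side : V -> bool).
Hypothesis side_proper : forall e, side (src e) != side (tgt e).
Local Notation inc := (incident src tgt).
Local Notation dhead := (dhead src tgt).
Local Notation dtail := (dtail src tgt).

Variables (k : nat) (F : {set E}) (col : E -> 'I_k) (a b : 'I_k) (u v : V) (e0 : E).
Hypotheses (col_proper : proper_coloring src tgt F col) (neq_ab : a != b).
Hypotheses (side_uv : side u != side v)
  (a_free_u : forall f, f \in F -> inc u f -> col f != a)
  (b_free_v : forall f, f \in F -> inc v f -> col f != b).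
Hypotheses (e0F : e0 \in F) (v_e0 : inc v e0) (col_e0 : col e0 = a).

Lemma side_dhead x : side (dhead x) = ~~ side (dtail x).
Proof.
by rewrite /dhead /dtail; case: x.2; move: (side_proper x.1);
  case: (side (src _)); case: (side (tgt _)).
Qed.

Definition ab_edge f := (f \in F) && ((col f == a) || (col f == b)).

Lemma ab_other_color f g : ab_edge f -> ab_edge g -> col g != col f ->
  (col g == a) = ~~ (col f == a).
Proof.
have ba : (b == a) = false by rewrite eq_sym (negbTE neq_ab).
by case/andP=> _ /orP[]/eqP-> /andP[_ /orP[]/eqP->]; rewrite ?eqxx ?ba.
Qed.

(* The Kempe chain of colours [a, b] through [e0], explored along darts so that
   the bipartition side of the current head can be tracked. *)
Definition kempe_step : rel (E * bool) :=
  [rel x y | [&& ab_edge x.1, ab_edge y.1, col y.1 != col x.1 & dtail y == dhead x]].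

Definition kempe_start := (e0, src e0 == v).

Definition kempe_reached := connect kempe_step kempe_start.

Definition kempe_chain : {set E} :=
  [set f | kempe_reached (f, true) || kempe_reached (f, false)].

Lemma dtail_kempe_start : dtail kempe_start = v.
Proof. exact: dtail_from. Qed.

Lemma kempe_chainP f : reflect (exists2 x, kempe_reached x & x.1 = f) (f \in kempe_chain).
Proof.
rewrite inE; apply: (iffP orP) => [[] reached_f | [[g []] /= reached_g <-]]; auto.
  by exists (f, true).
by exists (f, false).
Qed.

Lemma kempe_reached_ab x : kempe_reached x -> ab_edge x.1.
Proof.
move=> reached_x; apply: (connect_preserved (P := fun y => ab_edge y.1)) reached_x _.
  by move=> y z /and4P[].
by rewrite /ab_edge e0F col_e0 eqxx.
Qed.

(* Along the chain the colour alternates and the side of the head flips. *)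
Lemma kempe_reached_parity x : kempe_reached x -> side (dhead x) (+) (col x.1 == a) = side v.
Proof.
move=> reached_x; apply/eqP.
apply: (connect_preserved (P := fun y => side (dhead y) (+) (col y.1 == a) == side v)) reached_x _.
  move=> y z /and4P[aby abz col_yz /eqP tail_z].
  by rewrite [side (dhead z)]side_dhead tail_z (ab_other_color aby abz col_yz) addNb addbN negbK.
by rewrite side_dhead dtail_kempe_start col_e0 eqxx addbT negbK.
Qed.

Lemma kempe_reached_dhead x : kempe_reached x -> dhead x != u.
Proof.
move=> reached_x; apply/eqP=> head_x; move: (kempe_reached_parity reached_x).
have /andP[xF _] := kempe_reached_ab reached_x.
rewrite head_x (negbTE (a_free_u xF _)) ?addbF => [side_u|]; last first.
  by rewrite -head_x incident_dhead.
by move: side_uv; rewrite side_u eqxx.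
Qed.

Lemma kempe_reached_dtail x : kempe_reached x -> dtail x != u.
Proof.
move=> reached_x; have [->|x_start] := eqVneq x kempe_start.
  by rewrite dtail_kempe_start; apply: contraNneq side_uv => ->.
have [y reached_y /and4P[_ _ _ /eqP->]] := connect_last_step reached_x x_start.
exact: kempe_reached_dhead.
Qed.

Lemma kempe_chain_avoids_u f : f \in kempe_chain -> ~~ inc u f.
Proof.
case/kempe_chainP=> x reached_x <-; apply/negP=> /incident_dart[]/esym/eqP.
  by apply/negP; exact: kempe_reached_dhead.
by apply/negP; exact: kempe_reached_dtail.
Qed.

Lemma kempe_chain_closed x g : kempe_reached x -> ab_edge g -> col g != col x.1 ->
  share src tgt x.1 g -> g \in kempe_chain.
Proof.
move=> reached_x abg col_gx /shareP[w /andP[wx wg]].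
have abx := kempe_reached_ab reached_x.
have [head_x | tail_x] := incident_dart wx.
  apply/kempe_chainP; exists (g, src g == w) => //.
  apply: connect_trans reached_x (connect1 _).
  by rewrite /kempe_step /= abx abg col_gx dtail_from // head_x eqxx.
have [x_start | x_nstart] := eqVneq x kempe_start.
  have w_v : w = v by rewrite tail_x x_start dtail_kempe_start.
  have /andP[gF /orP[/eqP col_ga | /eqP col_gb]] := abg.
    by move: col_gx; rewrite x_start col_e0 col_ga eqxx.
  by move: (b_free_v gF); rewrite -w_v wg col_gb eqxx => /(_ isT).
have [y reached_y /and4P[aby _ col_xy /eqP tail_x']] :=
  connect_last_step reached_x x_nstart.
suff <- : y.1 = g by apply/kempe_chainP; exists y.
have wy : inc w y.1 by rewrite tail_x tail_x' incident_dhead.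
have col_yg : col y.1 = col g.
  move: (proj2 (andP abx)) (proj2 (andP aby)) (proj2 (andP abg)) col_xy col_gx.
  by do 3 case/orP=> /eqP->; rewrite ?eqxx.
apply: contra_eq col_yg => yg.
by apply: col_proper (share_incident wy wg); [case/andP: aby | case/andP: abg | ].
Qed.

Definition kempe_swap f := if f \in kempe_chain then tperm a b (col f) else col f.

Lemma kempe_swap_proper : proper_coloring src tgt F kempe_swap.
Proof.
have mixed e f : e \in kempe_chain -> f \notin kempe_chain -> e \in F -> f \in F -> e != f ->
    share src tgt e f -> tperm a b (col e) != col f.
  move=> /kempe_chainP[x reached_x <-] f_chain xF fF xf share_xf.
  apply: contra f_chain => /eqP swap_x.
  have /andP[_ abx] := kempe_reached_ab reached_x.
  apply: (kempe_chain_closed reached_x _ _ share_xf); last by rewrite eq_sym col_proper.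
  by rewrite /ab_edge fF -swap_x; case/orP: abx => /eqP->; rewrite ?tpermL ?tpermR eqxx ?orbT.
move=> e f eF fF ef share_ef; rewrite /kempe_swap.
case: ifP => e_chain; case: ifP => f_chain.
- by rewrite (inj_eq perm_inj) col_proper.
- by rewrite mixed ?f_chain.
- by rewrite eq_sym mixed ?e_chain // 1?eq_sym // share_sym.
- exact: col_proper.
Qed.

Lemma kempe_swap_free_u f : f \in F -> inc u f -> kempe_swap f != a.
Proof.
move=> fF uf; rewrite /kempe_swap; case: ifPn => [/kempe_chain_avoids_u|_].
  by rewrite uf.
exact: a_free_u.
Qed.

Lemma kempe_swap_free_v f : f \in F -> inc v f -> kempe_swap f != a.
Proof.
move=> fF vf; rewrite /kempe_swap; case: ifPn => [_|f_chain].
  by rewrite -[X in _ != X](tpermR a b) (inj_eq perm_inj) b_free_v.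
apply: contra f_chain => /eqP col_f; suff -> : f = e0.
  by apply/kempe_chainP; exists kempe_start; first exact: connect0.
apply: contraTeq (eqxx a) => fe0; rewrite -{1}col_f -col_e0.
by apply: col_proper => //; exact: share_incident vf v_e0.
Qed.

End KempeChain.

Section EdgeColoring.
Variables (V E : finType) (src tgt : E -> V).
Local Notation inc := (incident src tgt).
Local Notation deg := (deg_in src tgt).
Local Notation k_colorable := (k_colorable src tgt).
Local Notation proper_coloring := (proper_coloring src tgt).

Lemma proper_coloring_setD1 k (F : {set E}) e (col : E -> 'I_k) (c : 'I_k) :
  proper_coloring (F :\ e) col ->
  (forall f, f \in F :\ e -> inc (src e) f -> col f != c) ->
  (forall f, f \in F :\ e -> inc (tgt e) f -> col f != c) ->
  proper_coloring F (fun f => if f == e then c else col f).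
Proof.
move=> col_proper c_free_src c_free_tgt.
have c_free f : f \in F -> f != e -> share src tgt e f -> col f != c.
  move=> fF fe /shareP[w /andP[/orP[]/eqP<- wf]].
    by apply: c_free_src; rewrite // !inE fe.
  by apply: c_free_tgt; rewrite // !inE fe.
move=> f g fF gF fg share_fg; case: (eqVneq f e) => [fe|fe]; case: (eqVneq g e) => [ge|ge].
- by move: fg; rewrite fe ge eqxx.
- by rewrite eq_sym c_free // -fe.
- by rewrite c_free // -ge share_sym.
- by apply: col_proper; rewrite // !inE ?fe ?ge.
Qed.

Variables (side : V -> bool) (side_proper : forall e, side (src e) != side (tgt e)).

Lemma kempe_exchange k (F : {set E}) (col : E -> 'I_k) (a b : 'I_k) u v :
    proper_coloring F col -> side u != side v ->
    (forall f, f \in F -> inc u f -> col f != a) ->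
    (forall f, f \in F -> inc v f -> col f != b) ->
  exists col' : E -> 'I_k, [/\ proper_coloring F col',
    forall f, f \in F -> inc u f -> col' f != a &
    forall f, f \in F -> inc v f -> col' f != a].
Proof.
move=> col_proper side_uv a_free_u b_free_v.
have [eq_ab | neq_ab] := eqVneq a b; first by subst b; exists col.
have [e0 /and3P[e0F v_e0 /eqP col_e0] | a_free_v] :=
  pickP [pred f | [&& f \in F, inc v f & col f == a]].
  exists (kempe_swap src tgt F col a b v e0); split.
  - exact: kempe_swap_proper col_proper b_free_v e0F v_e0 col_e0.
  - exact: (kempe_swap_free_u side_proper neq_ab side_uv a_free_u e0F v_e0 col_e0).
  - exact: (kempe_swap_free_v col_proper b_free_v e0F v_e0 col_e0).
by exists col; split=> // f fF vf; move: (a_free_v f) => /=; rewrite fF vf => /negbT.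
Qed.

(* König's edge-colouring theorem, by induction on the number of edges: an edge
   [e] can be added once a Kempe exchange makes a colour free at both its ends. *)
Lemma bipartite_k_colorable k (F : {set E}) :
  0 < k -> (forall v, deg F v <= k) -> k_colorable k F.
Proof.
move=> k_gt0; have [n] := ubnP #|F|; elim: n F => // n IHn F; rewrite ltnS => F_le degF.
have [->|[e eF]] := set_0Vmem F.
  by apply/k_colorableP; exists (fun=> Ordinal k_gt0) => f g; rewrite inE.
have degF' w : deg (F :\ e) w <= k by apply: leq_trans (degF w); apply/subset_deg/subsetDl.
have /k_colorableP[col col_proper] : k_colorable k (F :\ e).
  by apply: IHn degF'; rewrite (cardsD1 e F) eF in F_le.
have [a a_free] := missing_color col (leq_trans (deg_setD1 eF (incident_src src tgt e)) (degF _)).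
have [b b_free] := missing_color col (leq_trans (deg_setD1 eF (incident_tgt src tgt e)) (degF _)).
have [col' [col'_proper a_free_src a_free_tgt]] :=
  kempe_exchange col_proper (side_proper e) a_free b_free.
by apply/k_colorableP; exists (fun f => if f == e then a else col' f); apply: proper_coloring_setD1.
Qed.

End EdgeColoring.

Section VertexSplitting.
Variables (V E : finType) (src tgt : E -> V) (J : {set E}).
Local Notation inc := (incident src tgt).
Local Notation deg := (deg_in src tgt).

Definition rank_at x f := index f (enum [set g in J | inc x g]).

(* Vertex [x] is split into the vertices [(x, i)]; the edges of [J] at [x] of
   rank [2 i] and [2 i + 1] are attached to [(x, i)]. *)
Definition slot x f : 'I_#|E|.+1 := inord (rank_at x f %/ 2).

Definition split_src f := (src f, slot (src f) f).
Definition split_tgt f := (tgt f, slot (tgt f) f).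

Local Notation split_inc := (incident split_src split_tgt).

Lemma rank_at_lt x f : f \in J -> inc x f -> rank_at x f < deg J x.
Proof. by move=> fJ xf; rewrite /deg_in cardE /rank_at index_mem mem_enum inE fJ xf. Qed.

Lemma rank_at_inj {x f g} : f \in J -> inc x f -> g \in J -> inc x g ->
  rank_at x f = rank_at x g -> f = g.
Proof. by move=> fJ xf gJ xg; apply: (index_inj f); rewrite mem_enum inE ?fJ ?gJ. Qed.

Lemma slotE x f : f \in J -> inc x f -> slot x f = rank_at x f %/ 2 :> nat.
Proof.
move=> fJ xf; rewrite inordK // ltnS; apply: leq_trans (leq_div _ _) _.
exact: leq_trans (ltnW (rank_at_lt fJ xf)) (max_card _).
Qed.

Lemma incident_split p f : split_inc p f -> inc p.1 f /\ slot p.1 f = p.2.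
Proof.
by case: p => x i; rewrite /incident /split_src /split_tgt => /orP[]/eqP[<- <-];
  rewrite eqxx ?orbT.
Qed.

Lemma incident_split_slot x f : inc x f -> split_inc (x, slot x f) f.
Proof. by rewrite /incident => /orP[]/eqP<-; rewrite /split_src /split_tgt eqxx ?orbT. Qed.

Lemma deg_split_le2 p : deg_in split_src split_tgt J p <= 2.
Proof.
apply: (@card_leq_inj_lt _ _ (fun f => odd (rank_at p.1 f))) => [f g|f _]; last by case: odd.
rewrite !inE => /andP[fJ /incident_split[xf slot_f]] /andP[gJ /incident_split[xg slot_g]].
move=> odd_fg; apply: (rank_at_inj fJ xf gJ xg).
have := slotE fJ xf; have := slotE gJ xg; rewrite slot_f slot_g.
have := divn_eq (rank_at p.1 f) 2; have := divn_eq (rank_at p.1 g) 2.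
rewrite !modn2 odd_fg; lia.
Qed.

Lemma deg_split_color_class (col : E -> 'I_2) (H : {set E}) x :
    proper_coloring split_src split_tgt J col -> H \subset J ->
    {in H &, forall f g, col f = col g} ->
  deg H x <= uphalf (deg J x).
Proof.
move=> col_proper HJ col_H.
apply: (@card_leq_inj_lt _ _ (fun f => rank_at x f %/ 2)) => [f g|f].
  rewrite !inE => /andP[fH xf] /andP[gH xg] slot_fg.
  have fJ := subsetP HJ f fH; have gJ := subsetP HJ g gH.
  apply: contra_eq (col_H f g fH gH) => fg; apply: col_proper => //.
  apply: share_incident (incident_split_slot xf) _.
  have -> : slot x f = slot x g by apply: val_inj; rewrite /= !slotE.
  exact: incident_split_slot.
rewrite inE => /andP[fH xf]; have := rank_at_lt (subsetP HJ f fH) xf; lia.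
Qed.

(* Splitting each vertex turns [J] into a bipartite graph of maximum degree 2,
   whose two colour classes halve the degrees of [J]. *)
Lemma bipartite_halve (side : V -> bool) :
    (forall e, side (src e) != side (tgt e)) ->
  exists2 J1 : {set E}, J1 \subset J &
    forall x, deg J1 x <= uphalf (deg J x) /\ deg (J :\: J1) x <= uphalf (deg J x).
Proof.
move=> side_proper.
have /k_colorableP[col col_proper] :=
  @bipartite_k_colorable _ _ split_src split_tgt (fun p => side p.1) side_proper
    2 J isT deg_split_le2.
exists [set f in J | col f == ord0] => [|x].
  by apply/subsetP=> f; rewrite inE => /andP[].
split; apply: deg_split_color_class col_proper _ _.
- by apply/subsetP=> f; rewrite inE => /andP[].
- by move=> f g; rewrite !inE => /andP[_ /eqP->] /andP[_ /eqP->].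
- exact: subsetDl.
- move=> f g; rewrite !inE => /andP[col_f fJ] /andP[col_g gJ].
  move: col_f col_g; rewrite fJ gJ /= => col_f col_g; apply: val_inj.
  by move: col_f col_g; rewrite -!val_eqE /=; case: (col f) (col g) => [[|[|?]] ?] [[|[|?]] ?].
Qed.

End VertexSplitting.

Theorem theorem14 (V E : finType) (src tgt : E -> V) (k : nat) :
  2 <= k ->
  loopless src tgt ->
  bipartite src tgt ->
  at_most_one_cycle src tgt ->
  nu src tgt k.-1 + nu src tgt k.+1 <= 2 * nu src tgt k.
Proof.
move=> k_ge2 _ [side side_proper] _.
have [F1 F1_col ->] : exists2 F, k_colorable src tgt k.-1 F & nu src tgt k.-1 = #|F|.
  by apply: nu_witness; lia.
have [F2 F2_col ->] : exists2 F, k_colorable src tgt k.+1 F & nu src tgt k.+1 = #|F|.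
  exact: nu_witness.
have deg_F12 w : deg_in src tgt F1 w + deg_in src tgt F2 w <= 2 * k.
  by have := k_colorable_deg w F1_col; have := k_colorable_deg w F2_col; lia.
set J := (F1 :|: F2) :\: (F1 :&: F2).
have [J1 J1J deg_J1] := bipartite_halve J side_proper.
have colorable_part H : (forall w, deg_in src tgt H w <= uphalf (deg_in src tgt J w)) ->
    #|F1 :&: F2 :|: H| <= nu src tgt k.
  move=> deg_H; apply/leq_nu/(bipartite_k_colorable side_proper); first lia.
  by move=> w; apply: deg_setIU_le (deg_F12 w) (deg_H w).
rewrite -(cards_symdiff_split J1J) mul2n -addnn.
by rewrite leq_add // colorable_part // => w; case: (deg_J1 w).
Qed.
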